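(* For $\varepsilon\in(0,1/256]$, the number of pairs $(\mathcal S(\tau),\rho)$ with $\tau\in\Gamma$ and $\rho\in\{1,\dots,\lceil1/\varepsilon\rceil\}^{|\tau|}$ is $(\lceil1/\varepsilon\rceil)^{O(\sqrt{C_\varepsilon})}$.
   Context: $C_\varepsilon=\lceil\log_{1+\varepsilon}(1/\varepsilon)\rceil$. $\Gamma$ is the set of integer vectors $\tau=(\tau_1,\dots,\tau_K)\in\mathbb{Z}_{\ge0}^K$ with $0\le K=|\tau|\le\lceil2\sqrt{C_\varepsilon}\rceil$, $\tau_k+k\le\tau_{k+1}$ for $k\in[K-1]$, and $\tau_K\le C_\varepsilon-1$. For a Minimum Knapsack instance with costs indexed so that $1=c_1\ge\dots\ge c_n$, and $\tau\in\Gamma$, $\mathcal S(\tau)=\{S_1,\dots,S_K,S_\infty\}$ with $S_k=\{i\in\{2,\dots,n\}:(1+\varepsilon)^{-\tau_k}\ge c_i>(1+\varepsilon)^{-\min\{\tau_k+k,C_\varepsilon\}}\}$ for $k\in[K]$, and $S_\infty=\{i\in\{2,\dots,n\}: c_i\le(1+\varepsilon)^{-C_\varepsilon}\text{ and } c_i<\min_{l\in S_K}c_l\}$ (the second condition omitted if $K=0$). *)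

From Stdlib Require Import Reals Lra Lia ZArith Arith List.
Import ListNotations.
Open Scope R_scope.

Definition Zceil (x : R) : Z :=
  let z := up x in
  if Rle_dec x (IZR z - 1) then (z - 1)%Z else z.

Definition nceil (x : R) : nat := Z.to_nat (Zceil x).

Definition C_eps (eps : R) : nat := nceil (ln (/ eps) / ln (1 + eps)).

(* 1-based access to tau = (tau_1, ..., tau_K) represented as a list *)
Definition nth1 (tau : list nat) (k : nat) : nat := nth (k - 1) tau 0%nat.

Definition inGamma (eps : R) (tau : list nat) : Prop :=
  let K := length tau in
  (INR K <= IZR (Zceil (2 * sqrt (INR (C_eps eps)))))
  /\ (forall k : nat, (1 <= k)%nat -> (k <= K - 1)%nat ->
        (nth1 tau k + k <= nth1 tau (k + 1))%nat)
  /\ ((1 <= K)%nat -> (nth1 tau K <= C_eps eps - 1)%nat).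

Definition idx2n (n : nat) : list nat := seq 2 (n - 1).

Definition S_k (eps : R) (n : nat) (c : nat -> R) (tau : list nat) (k : nat)
  : list nat :=
  filter (fun i =>
    if Rle_dec (c i) (/ (1 + eps) ^ (nth1 tau k)) then
      if Rlt_dec (/ (1 + eps) ^ (Nat.min (nth1 tau k + k) (C_eps eps))) (c i)
      then true else false
    else false) (idx2n n).

(* S_infty = { i in {2..n} : c_i <= (1+eps)^{-C_eps} and c_i < min_{l in S_K} c_l }
   (second condition omitted when K = 0; the minimum over an empty S_K is
   read as +infinity, i.e. the condition is then vacuous). *)
Definition S_inf (eps : R) (n : nat) (c : nat -> R) (tau : list nat) : list nat :=
  let K := length tau in
  filter (fun i =>
    if Rle_dec (c i) (/ (1 + eps) ^ (C_eps eps)) then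
      match K with
      | O => true
      | _ => forallb (fun l => if Rlt_dec (c i) (c l) then true else false)
                     (S_k eps n c tau K)
      end
    else false) (idx2n n).

Definition S_of (eps : R) (n : nat) (c : nat -> R) (tau : list nat)
  : list (list nat) :=
  map (S_k eps n c tau) (seq 1 (length tau)) ++ [S_inf eps n c tau].

Definition valid_rho (eps : R) (tau rho : list nat) : Prop :=
  length rho = length tau /\
  Forall (fun r => (1 <= r)%nat /\ (r <= nceil (/ eps))%nat) rho.

Definition admissible_pair (eps : R) (n : nat) (c : nat -> R)
  (p : list (list nat) * list nat) : Prop :=
  exists tau rho, inGamma eps tau /\ valid_rho eps tau rho /\
    p = (S_of eps n c tau, rho).

(* The pair (S(tau), rho) is a function of (tau, rho), so it suffices to count
   the pairs (tau, rho) themselves.  A tau in Gamma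
   has K <= M := ceil(2 sqrt C) entries, all below C because tau is increasing
   with tau_K <= C - 1, and rho has K entries in [1, N] with N := ceil(1/eps);
   hence there are at most (M + 1) C^M N^M pairs.  Since ln(1/eps) <= 1/eps
   and ln(1 + eps) >= eps/2, C <= 2 N^2, so the count is at most
   N^(5M) <= N^(15 sqrt C). *)

From Pilot Require Import Defs.
From Stdlib Require Import Reals List Lra Lia ZArith.
Import ListNotations.
Open Scope R_scope.

Lemma Zceil_spec x : x <= IZR (Defs.Zceil x) < x + 1.
Proof.
  unfold Defs.Zceil. destruct (archimed x) as [Hup1 Hup2].
  destruct (Rle_dec x (IZR (up x) - 1)).
  - rewrite minus_IZR. simpl. lra.
  - lra.
Qed.

Lemma INR_nceil x : 0 <= x -> INR (nceil x) = IZR (Defs.Zceil x).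
Proof.
  intros Hx. destruct (Zceil_spec x) as [Hlo _].
  assert (Hpos : (0 <= Defs.Zceil x)%Z) by (apply le_IZR; lra).
  unfold nceil. rewrite INR_IZR_INZ, Z2Nat.id by exact Hpos. reflexivity.
Qed.

Lemma nceil_spec x : 0 <= x -> x <= INR (nceil x) < x + 1.
Proof. intros Hx. rewrite INR_nceil by exact Hx. apply Zceil_spec. Qed.

Lemma ln_le_sub1 y : 0 < y -> ln y <= y - 1.
Proof.
  intros Hy. rewrite <- (ln_exp (y - 1)).
  destruct (Req_dec y (exp (y - 1))) as [Heq | Hneq].
  - rewrite <- Heq. lra.
  - left. apply ln_increasing; [exact Hy |].
    pose proof (exp_ineq1_le (y - 1)). lra.
Qed.

Lemma ln_1_plus_ge eps : 0 <= eps <= 1 -> eps / 2 <= ln (1 + eps).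
Proof.
  intros Heps.
  assert (Hinv : 0 < / (1 + eps)) by (apply Rinv_0_lt_compat; lra).
  pose proof (ln_le_sub1 _ Hinv) as Hln. rewrite ln_Rinv in Hln by lra.
  assert (Hhalf : / 2 <= / (1 + eps)) by (apply Rinv_le_contravar; lra).
  assert (Hcancel : / (1 + eps) * (1 + eps) = 1) by (field; lra).
  nra.
Qed.

Lemma C_eps_ge1 eps : 0 < eps < 1 -> (1 <= C_eps eps)%nat.
Proof.
  intros Heps.
  assert (Hnum : 0 < ln (/ eps)).
  { rewrite <- ln_1. apply ln_increasing; [lra |].
    rewrite <- Rinv_1. apply Rinv_lt_contravar; lra. }
  assert (Hden : 0 < ln (1 + eps)) by (pose proof (ln_1_plus_ge eps); lra).
  assert (Hratio : 0 < ln (/ eps) / ln (1 + eps)) by (apply Rdiv_lt_0_compat; lra).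
  destruct (nceil_spec _ (Rlt_le _ _ Hratio)) as [Hlo _].
  apply (INR_lt 0). unfold C_eps. simpl. lra.
Qed.

Lemma C_eps_le eps : 0 < eps <= 1 -> (C_eps eps <= 2 * nceil (/ eps) ^ 2)%nat.
Proof.
  intros Heps.
  set (u := / eps).
  assert (Hu1 : 1 <= u) by (unfold u; rewrite <- Rinv_1; apply Rinv_le_contravar; lra).
  destruct (nceil_spec u ltac:(lra)) as [HuN _].
  set (N := INR (nceil u)) in HuN.
  assert (Hnum0 : 0 <= ln u).
  { rewrite <- ln_1. destruct (Rle_lt_or_eq_dec 1 u Hu1) as [Hlt | <-].
    - left. apply ln_increasing; lra.
    - right. reflexivity. }
  assert (Hnum : ln u <= u) by (pose proof (ln_le_sub1 u ltac:(lra)); lra).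
  assert (Hden : eps / 2 <= ln (1 + eps)) by (apply ln_1_plus_ge; lra).
  assert (Hinv : / ln (1 + eps) <= 2 * u).
  { replace (2 * u) with (/ (eps / 2)) by (unfold u; field; lra).
    apply Rinv_le_contravar; lra. }
  assert (Hinv0 : 0 < / ln (1 + eps)) by (apply Rinv_0_lt_compat; lra).
  assert (Hratio : ln u / ln (1 + eps) <= 2 * N ^ 2).
  { unfold Rdiv.
    apply Rle_trans with (u * (2 * u)); [apply Rmult_le_compat; lra |].
    simpl. nra. }
  assert (Hratio0 : 0 <= ln u / ln (1 + eps)) by (apply Rmult_le_pos; lra).
  destruct (nceil_spec _ Hratio0) as [_ HC].
  change (INR (C_eps eps) < ln u / ln (1 + eps) + 1) in HC.
  assert (Hlt : (C_eps eps < 2 * nceil u ^ 2 + 1)%nat).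
  { apply INR_lt. rewrite plus_INR, mult_INR, pow_INR. simpl. fold N. lra. }
  lia.
Qed.

Lemma nceil_inv_ge2 eps : 0 < eps <= / 2 -> (2 <= nceil (/ eps))%nat.
Proof.
  intros Heps.
  assert (H2 : 2 <= / eps).
  { replace 2 with (/ / 2) by field. apply Rinv_le_contravar; lra. }
  destruct (nceil_spec (/ eps) ltac:(lra)) as [Hlo _].
  apply INR_le. simpl. lra.
Qed.

Fixpoint tuples {A} (D : list A) (K : nat) : list (list A) :=
  match K with
  | O => [nil]
  | S k => flat_map (fun x => map (cons x) (tuples D k)) D
  end.

Lemma length_tuples {A} (D : list A) K : length (tuples D K) = (length D ^ K)%nat.
Proof.
  induction K as [| K IHK]; [reflexivity |]. simpl.
  rewrite (flat_map_constant_length (c := (length D ^ K)%nat)); [reflexivity |].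
  intros x _. rewrite length_map. exact IHK.
Qed.

Lemma in_tuples {A} (D : list A) l : incl l D -> In l (tuples D (length l)).
Proof.
  induction l as [| x l IHl]; intros Hincl; simpl; [now left |].
  apply in_flat_map. exists x. split; [apply Hincl; now left |].
  apply in_map, IHl. intros y Hy. apply Hincl. now right.
Qed.

Lemma length_flat_map_le {A B} (f : A -> list B) l b :
  (forall x, In x l -> (length (f x) <= b)%nat) ->
  (length (flat_map f l) <= length l * b)%nat.
Proof.
  induction l as [| x l IHl]; intros Hf; simpl; [lia |].
  rewrite length_app.
  specialize (IHl (fun y Hy => Hf y (or_intror Hy))).
  specialize (Hf x (or_introl eq_refl)). lia.
Qed.

Definition candidates (C N M : nat) : list (list nat * list nat) :=
  flat_map (fun K => list_prod (tuples (seq 0 C) K) (tuples (seq 1 N) K))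
    (seq 0 (S M)).

Lemma length_candidates_le C N M : (1 <= C)%nat -> (1 <= N)%nat ->
  (length (candidates C N M) <= S M * (C ^ M * N ^ M))%nat.
Proof.
  intros HC HN. unfold candidates.
  rewrite <- (length_seq (S M) 0) at 2. apply length_flat_map_le.
  intros K HK. apply in_seq in HK.
  rewrite length_prod, !length_tuples, !length_seq.
  apply Nat.mul_le_mono; apply Nat.pow_le_mono_r; lia.
Qed.

Lemma in_candidates C N M tau rho :
  (length tau <= M)%nat -> length rho = length tau ->
  incl tau (seq 0 C) -> incl rho (seq 1 N) ->
  In (tau, rho) (candidates C N M).
Proof.
  intros HM Hlen Htau Hrho. apply in_flat_map. exists (length tau). split.
  - apply in_seq. lia.
  - apply in_prod; [now apply in_tuples |]. rewrite <- Hlen. now apply in_tuples.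
Qed.

Lemma candidates_bound C N M : (1 < N)%nat -> (1 <= C <= 2 * N ^ 2)%nat ->
  (S M * (C ^ M * N ^ M) <= N ^ (5 * M))%nat.
Proof.
  intros HN HC.
  assert (HM : (S M <= N ^ M)%nat) by (apply Nat.pow_gt_lin_r; lia).
  assert (HCM : (C ^ M <= N ^ (3 * M))%nat).
  { rewrite Nat.pow_mul_r. apply Nat.pow_le_mono_l.
    rewrite Nat.pow_succ_r'. pose proof (Nat.mul_le_mono_r 2 N (N ^ 2)). lia. }
  replace (5 * M)%nat with (M + (3 * M + M))%nat by lia.
  rewrite !Nat.pow_add_r. apply Nat.mul_le_mono; [exact HM |].
  apply Nat.mul_le_mono; lia.
Qed.

Lemma nth_le_of_adjacent (l : list nat) :
  (forall i, (S i < length l)%nat -> (nth i l 0 <= nth (S i) l 0)%nat) ->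
  forall d i, (i + d < length l)%nat -> (nth i l 0 <= nth (i + d) l 0)%nat.
Proof.
  intros Hadj d. induction d as [| d IHd]; intros i Hid.
  - rewrite Nat.add_0_r. lia.
  - specialize (IHd i ltac:(lia)). specialize (Hadj (i + d)%nat ltac:(lia)).
    rewrite Nat.add_succ_r. lia.
Qed.

Lemma inGamma_entries_lt eps tau : (1 <= C_eps eps)%nat -> inGamma eps tau ->
  incl tau (seq 0 (C_eps eps)).
Proof.
  intros HC [_ [Hincr Hlast]] x Hx. apply in_seq.
  destruct (In_nth _ _ 0%nat Hx) as [i [Hi <-]].
  assert (Hadj : forall j, (S j < length tau)%nat -> (nth j tau 0 <= nth (S j) tau 0)%nat).
  { intros j Hj. specialize (Hincr (S j) ltac:(lia) ltac:(lia)).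
    unfold nth1 in Hincr. replace (S j + 1 - 1)%nat with (S j) in Hincr by lia.
    simpl in Hincr. rewrite Nat.sub_0_r in Hincr. lia. }
  pose proof (nth_le_of_adjacent tau Hadj (length tau - 1 - i) i ltac:(lia)) as Hle.
  replace (i + (length tau - 1 - i))%nat with (length tau - 1)%nat in Hle by lia.
  specialize (Hlast ltac:(lia)). unfold nth1 in Hlast. lia.
Qed.

Lemma inGamma_length_le eps tau : inGamma eps tau ->
  (length tau <= nceil (2 * sqrt (INR (C_eps eps))))%nat.
Proof.
  intros [Hlen _].
  assert (Hnonneg : 0 <= 2 * sqrt (INR (C_eps eps))).
  { pose proof (sqrt_pos (INR (C_eps eps))). lra. }
  apply INR_le. rewrite INR_nceil by exact Hnonneg. exact Hlen.
Qed.

Lemma admissible_pairs_incl eps n c L : (1 <= C_eps eps)%nat ->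
  (forall p, In p L -> admissible_pair eps n c p) ->
  incl L (map (fun p => (S_of eps n c (fst p), snd p))
    (candidates (C_eps eps) (nceil (/ eps)) (nceil (2 * sqrt (INR (C_eps eps)))))).
Proof.
  intros HC Hadm p Hp.
  destruct (Hadm p Hp) as [tau [rho [HG [[Hlen Hrho] ->]]]].
  apply (in_map (fun p => (S_of eps n c (fst p), snd p)) _ (tau, rho)).
  apply in_candidates; auto using inGamma_length_le, inGamma_entries_lt.
  intros r Hr. rewrite Forall_forall in Hrho. apply in_seq.
  specialize (Hrho r Hr). lia.
Qed.

Theorem lemma6 :
  exists a : R, 0 < a /\
  forall (eps : R), 0 < eps -> eps <= / 256 ->
  forall (n : nat) (c : nat -> R),
    (1 <= n)%nat -> c 1%nat = 1 ->
    (forall i, (1 <= i)%nat -> (i < n)%nat -> c (S i) <= c i) ->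
  forall L : list (list (list nat) * list nat),
    NoDup L ->
    (forall p, In p L -> admissible_pair eps n c p) ->
    INR (length L) <= Rpower (INR (nceil (/ eps))) (a * sqrt (INR (C_eps eps))).
Proof.
  exists 15. split; [lra |].
  intros eps He He256 n c _ _ _ L Hnodup Hadm.
  pose proof (C_eps_ge1 eps ltac:(lra)) as HC1.
  pose proof (C_eps_le eps ltac:(lra)) as HC2.
  pose proof (nceil_inv_ge2 eps ltac:(lra)) as HN.
  set (C := C_eps eps) in *. set (N := nceil (/ eps)) in *.
  set (M := nceil (2 * sqrt (INR C))).
  assert (Hcount : (length L <= N ^ (5 * M))%nat).
  { eapply Nat.le_trans.
    { eapply NoDup_incl_length; [exact Hnodup |].
      exact (admissible_pairs_incl eps n c L HC1 Hadm). }
    rewrite length_map.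
    eapply Nat.le_trans; [apply length_candidates_le; lia |].
    apply candidates_bound; lia. }
  assert (HsqrtC : 1 <= sqrt (INR C)).
  { rewrite <- sqrt_1. apply sqrt_le_1_alt. apply (le_INR 1). exact HC1. }
  destruct (nceil_spec (2 * sqrt (INR C)) ltac:(lra)) as [_ HM]. fold M in HM.
  apply le_INR in Hcount. eapply Rle_trans; [exact Hcount |].
  assert (HNR : 1 <= INR N) by (apply (le_INR 1); lia).
  rewrite pow_INR, <- Rpower_pow by lra.
  apply Rle_Rpower; [exact HNR |].
  rewrite mult_INR. simpl. lra.
Qed.
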